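(* Let $t$ be the Thue-Morse word, and let $i>0$ and $k>0$ be integers such that $t(i..i+k]$ is a palindrome, and suppose there is $m\in\{1,2,3\}$ with $i\equiv m\pmod 4$ and $i+k\equiv 4-m\pmod 4$. Then $t(i-1..i+k+1]$ is a palindrome, and $t(i+1..i+k-1]$ is a palindrome.
   Context: The Thue-Morse word $t=t[1]t[2]\cdots=abbabaabbaababba\cdots$ is the fixed point starting with $a$ of the morphism $\tau: a\mapsto abba,\ b\mapsto baab$. For $0\le i\le j$, $t(i..j]$ denotes the factor $t[i+1]t[i+2]\cdots t[j]$ (empty if $i=j$). A palindrome is a word $p=p[1]\cdots p[n]$ with $p[i]=p[n-i+1]$ for all $i$ (the empty word is a palindrome). *)

From HB Require Import structures.
From mathcomp Require Import all_boot.
Set Implicit Arguments. Unset Strict Implicit. Unset Printing Implicit Defensive.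

Inductive letter := a | b.
Definition letter_eqb (x y : letter) : bool :=
  match x, y with a, a | b, b => true | _, _ => false end.
Lemma letter_eqP : Equality.axiom letter_eqb.
Proof. by case; case; constructor. Qed.
HB.instance Definition _ := hasDecEq.Build letter letter_eqP.

Definition tau1 (x : letter) : seq letter :=
  match x with a => [:: a; b; b; a] | b => [:: b; a; a; b] end.
Definition tau (w : seq letter) : seq letter := flatten (map tau1 w).

Definition tm_prefix (n : nat) : seq letter := iter n tau [:: a].

(* t[n], 1-indexed: the n-th letter of the fixed point, read off tau^n(a)
   (which has length 4^n >= n). *)
Definition t (n : nat) : letter := nth a (tm_prefix n) n.-1.

(* t(i..j] = t[i+1] ... t[j] (empty if j <= i). *)
Definition factor (i j : nat) : seq letter := [seq t k | k <- iota i.+1 (j - i)].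

Definition palindrome (w : seq letter) : Prop := rev w = w.

(** Since [t] is the fixed point of [tau], each aligned block [t(4q..4q+4]] is
    [x x' x' x] with [x = t[q+1]] and [x'] the other letter.  Hence the letter
    changes across every odd position, [t[n+1] <> t[n]] for odd [n], and stays
    the same across positions [n = 2 (mod 4)].  Under the hypothesis, [i] and
    [i+k] are both odd or both [2 (mod 4)], so the equality [t[i+1] = t[i+k]]
    of the two ends of the palindrome propagates outwards to [t[i] = t[i+k+1]].
    Peeling off the two ends instead gives the inner palindrome. *)

From mathcomp Require Import all_boot.
From mathcomp Require Import zify.

Set Implicit Arguments.
Unset Strict Implicit.
Unset Printing Implicit Defensive.

Definition flip (x : letter) : letter := if x is a then b else a.

Lemma flipK : involutive flip.
Proof. by case. Qed.

Lemma tau1E x : tau1 x = [:: x; flip x; flip x; x].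
Proof. by case: x. Qed.

Lemma tau_cons x w : tau (x :: w) = tau1 x ++ tau w.
Proof. by []. Qed.

Lemma size_tau w : size (tau w) = 4 * size w.
Proof. by elim: w => //= x w IHw; rewrite tau_cons size_cat IHw tau1E /=; lia. Qed.

Lemma tau_cat u v : tau (u ++ v) = tau u ++ tau v.
Proof. by rewrite /tau map_cat flatten_cat. Qed.

Lemma nth_tau w q j : q < size w -> j < 4 ->
  nth a (tau w) (4 * q + j) = nth a (tau1 (nth a w q)) j.
Proof.
elim: w q => [|x w IHw] [|q] //= lt_q lt_j4; rewrite tau_cons nth_cat tau1E /=.
  by rewrite muln0 add0n lt_j4.
rewrite ifN; last by lia.
by rewrite (_ : 4 * q.+1 + j - 4 = 4 * q + j) ?IHw //; lia.
Qed.

Lemma tm_prefixS n : tm_prefix n.+1 = tau (tm_prefix n).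
Proof. by []. Qed.

Lemma size_tm_prefix n : size (tm_prefix n) = 4 ^ n.
Proof. by elim: n => // n IHn; rewrite tm_prefixS size_tau IHn expnS. Qed.

Lemma prefix_tau u v : prefix u v -> prefix (tau u) (tau v).
Proof. by case/prefixP => s ->; rewrite tau_cat prefix_prefix. Qed.

Lemma tm_prefix_mono m n : m <= n -> prefix (tm_prefix m) (tm_prefix n).
Proof.
have prefix_next k : prefix (tm_prefix k) (tm_prefix k.+1).
  by elim: k => // k IHk; apply: prefix_tau.
move/subnK <-; elim: (n - m) => [|d IHd]; first exact: prefix_refl.
exact: prefix_trans IHd (prefix_next _).
Qed.

Lemma nth_prefix (T : eqType) (x0 : T) u v p :
  prefix u v -> p < size u -> nth x0 v p = nth x0 u p.
Proof. by case/prefixP => s -> lt_p; rewrite nth_cat lt_p. Qed.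

Lemma t_nth N p : p < 4 ^ N -> t p.+1 = nth a (tm_prefix N) p.
Proof.
move=> lt_pN; have lt_p : p < 4 ^ p.+1.
  by apply: ltn_trans (ltn_expl p (isT : 1 < 4)) _; rewrite ltn_exp2l.
rewrite /t /= -(nth_prefix _ (tm_prefix_mono (leq_addr N p.+1))) ?size_tm_prefix //.
by rewrite -(nth_prefix _ (tm_prefix_mono (leq_addl p.+1 N))) ?size_tm_prefix.
Qed.

Lemma tS_block n : t n.+1 = nth a (tau1 (t (n %/ 4).+1)) (n %% 4).
Proof.
have lt_q := ltn_expl (n %/ 4) (isT : 1 < 4).
rewrite {1}(divn_eq n 4) mulnC (@t_nth (n %/ 4).+2); last by rewrite !expnS; lia.
by rewrite tm_prefixS nth_tau ?ltn_mod ?size_tm_prefix ?expnS //; lia.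
Qed.

Lemma tS_odd n : odd n -> t n.+1 = flip (t n).
Proof.
case: n => // n odd_n1; rewrite (tS_block n.+1) (tS_block n).
rewrite (_ : n.+1 %/ 4 = n %/ 4); last by lia.
have [[-> ->] | [-> ->]] :
  n %% 4 = 0 /\ n.+1 %% 4 = 1 \/ n %% 4 = 2 /\ n.+1 %% 4 = 3 by lia.
all: by rewrite tau1E ?flipK.
Qed.

Lemma tS_mod4_2 n : n %% 4 = 2 -> t n.+1 = t n.
Proof.
case: n => // n n2; rewrite (tS_block n.+1) (tS_block n) n2.
rewrite (_ : n.+1 %/ 4 = n %/ 4); last by lia.
by rewrite (_ : n %% 4 = 1) ?tau1E //; lia.
Qed.

Lemma t_border_ext i j :
  (odd i && odd j) || (i %% 4 == 2) && (j %% 4 == 2) ->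
  t i.+1 = t j -> t i = t j.+1.
Proof.
case/orP => [/andP[odd_i odd_j] | /andP[/eqP i2 /eqP j2]] eq_ij.
  by rewrite (tS_odd odd_j) -eq_ij (tS_odd odd_i) flipK.
by rewrite (tS_mod4_2 j2) -eq_ij (tS_mod4_2 i2).
Qed.

Lemma factor_cons_rcons i j : i < j ->
  factor i j.+1 = t i.+1 :: rcons (factor i.+1 j) (t j.+1).
Proof.
move=> lt_ij; rewrite /factor (_ : j.+1 - i = 1 + (j - i.+1) + 1); last by lia.
rewrite !iotaD cats1 map_rcons addn1 /=.
by rewrite (_ : i.+1 + (1 + (j - i.+1)) = j.+1) //; lia.
Qed.

Lemma palindrome_cons_rcons x y w :
  palindrome (x :: rcons w y) <-> x = y /\ palindrome w.
Proof.
by rewrite /palindrome rev_cons rev_rcons; split => [[-> /rcons_inj[]] | [-> ->]].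
Qed.

Theorem proposition6 (i k : nat) :
  0 < i -> 0 < k ->
  palindrome (factor i (i + k)) ->
  (exists2 m : nat, m \in [:: 1; 2; 3] &
     (i = m %[mod 4]) /\ (i + k = 4 - m %[mod 4])) ->
  palindrome (factor (i - 1) (i + k + 1)) /\
  palindrome (factor (i + 1) (i + k - 1)).
Proof.
move=> i_gt0 k_gt0 pal [m m123 [i_m ik_m]].
have [ends_eq inner] : t i.+1 = t (i + k) /\ palindrome (factor i.+1 (i + k - 1)).
  case: k k_gt0 pal {ik_m} => [|[|k]] // _ pal.
    split; first by rewrite addn1.
    by rewrite /factor (_ : i + 1 - 1 - i.+1 = 0) //; lia.
  move: pal; rewrite !addnS factor_cons_rcons ?ltnS ?leq_addr //.
  by case/palindrome_cons_rcons.
have ends_ext : t i = t (i + k).+1.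
  apply: t_border_ext ends_eq.
  by move: m123; rewrite !inE => /or3P[] /eqP m_def; subst m; apply/orP; lia.
split; last by rewrite addn1.
rewrite addn1 factor_cons_rcons subn1 ?prednK //; last by lia.
exact/palindrome_cons_rcons.
Qed.
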